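(* Let $E\in GL_m(k)$ and $F\in GL_n(k)$, and assume $H(E,F)\neq 0$. Then $(H(E),H(F),H(E,F),H(F,E))$ is a Hopf-Galois system, with structure maps $\alpha,\beta,\gamma,\delta$ all given on generators by $u_{ij}\mapsto\sum_k u_{ik}\otimes u_{kj}$ and $v_{ij}\mapsto\sum_k v_{ik}\otimes v_{kj}$.
   Context: $k$ is a field. For $E\in GL_m(k)$, $F\in GL_n(k)$, $H(E,F)$ is the universal algebra with generators $u_{ij},v_{ij}$, $1\le i\le m$, $1\le j\le n$, and relations $u\,{}^tv=I_m=v\,F\,{}^tu\,E^{-1}$ and ${}^tv\,u=I_n=F\,{}^tu\,E^{-1}v$, where $u=(u_{ij})$, $v=(v_{ij})$. $H(F):=H(F,F)$ is the universal cosovereign Hopf algebra, with $\Delta(u_{ij})=\sum_k u_{ik}\otimes u_{kj}$, $\Delta(v_{ij})=\sum_k v_{ik}\otimes v_{kj}$, $\varepsilon(u_{ij})=\varepsilon(v_{ij})=\delta_{ij}$. A Hopf-Galois system consists of four non-zero $k$-algebras $(A,B,Z,T)$ with: (HG1) $A,B$ bialgebras; (HG2) $Z$ an $A$-$B$-bicomodule algebra with coactions $\alpha:Z\to A\otimes Z$, $\beta:Z\to Z\otimes B$; (HG3) algebra morphisms $\gamma:A\to Z\otimes T$, $\delta:B\to T\otimes Z$ with $(\gamma\otimes 1_Z)\alpha=(1_Z\otimes\delta)\beta$, $(\alpha\otimes 1_T)\gamma=(1_A\otimes\gamma)\Delta_A$, $(1_T\otimes\beta)\delta=(\delta\otimes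 1_B)\Delta_B$; (HG4) a linear map $S:T\to Z$ with $m_Z(1_Z\otimes S)\gamma=u_Z\varepsilon_A$ and $m_Z(S\otimes 1_Z)\delta=u_Z\varepsilon_B$. *)

(* Presented (universal) k-algebras are encoded syntactically:
   an algebra given by generators X and relations R is the type [term X] of
   k-algebra expressions in the generators, modulo the congruence [teq R]
   generated by the axioms of a unital associative k-algebra and by R.
   Tensor products of presented algebras are presented algebras on the disjoint
   union of the generators (relations of both factors + commutation of the two
   families of generators). Algebra maps are given on generators. *)
From HB Require Import structures.
From mathcomp Require Import all_boot all_algebra.

Set Implicit Arguments.
Unset Strict Implicit.
Unset Printing Implicit Defensive.

Import GRing.Theory.
Local Open Scope ring_scope.

Section HopfGalois.
Context {k : fieldType}.

Inductive term (X : Type) : Type :=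
| tgen of X
| tscal of k
| tadd of term X & term X
| tmul of term X & term X.
Arguments tgen {X}.
Arguments tscal {X}.
Arguments tadd {X}.
Arguments tmul {X}.

Fixpoint subst (X Y : Type) (f : X -> term Y) (t : term X) : term Y :=
  match t with
  | tgen x => f x
  | tscal c => tscal c
  | tadd a b => tadd (subst f a) (subst f b)
  | tmul a b => tmul (subst f a) (subst f b)
  end.

Definition tmap (X Y : Type) (h : X -> Y) : term X -> term Y :=
  subst (fun x => tgen (h x)).

Inductive teq (X : Type) (R : term X -> term X -> Prop) : term X -> term X -> Prop :=
| teq_rel a b : R a b -> teq R a b
| teq_refl a : teq R a a
| teq_sym a b : teq R a b -> teq R b a
| teq_trans a b c : teq R a b -> teq R b c -> teq R a c
| teq_add a a' b b' : teq R a a' -> teq R b b' -> teq R (tadd a b) (tadd a' b')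
| teq_mul a a' b b' : teq R a a' -> teq R b b' -> teq R (tmul a b) (tmul a' b')
| teq_addA a b c : teq R (tadd a (tadd b c)) (tadd (tadd a b) c)
| teq_addC a b : teq R (tadd a b) (tadd b a)
| teq_add0 a : teq R (tadd (tscal 0) a) a
| teq_addN a : teq R (tadd a (tmul (tscal (-1)) a)) (tscal 0)
| teq_mulA a b c : teq R (tmul a (tmul b c)) (tmul (tmul a b) c)
| teq_mul1l a : teq R (tmul (tscal 1) a) a
| teq_mul1r a : teq R (tmul a (tscal 1)) a
| teq_mulDl a b c : teq R (tmul (tadd a b) c) (tadd (tmul a c) (tmul b c))
| teq_mulDr a b c : teq R (tmul a (tadd b c)) (tadd (tmul a b) (tmul a c))
| teq_scalD (x y : k) : teq R (tadd (tscal x) (tscal y)) (tscal (x + y))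
| teq_scalM (x y : k) : teq R (tmul (tscal x) (tscal y)) (tscal (x * y))
| teq_scalC (x : k) a : teq R (tmul (tscal x) a) (tmul a (tscal x)).

Record pres := Pres { gens : Type; rels : term gens -> term gens -> Prop }.

Definition peq (P : pres) : term (gens P) -> term (gens P) -> Prop := teq (@rels P).
Arguments peq : clear implicits.

Definition nonzero (P : pres) : Prop := ~ peq P (tscal 1) (tscal 0).

Definition kP : pres := @Pres Empty_set (fun _ _ => False).

Inductive tens_rel (P Q : pres) : term (gens P + gens Q) -> term (gens P + gens Q) -> Prop :=
| tr_l a b : @rels P a b -> tens_rel (tmap inl a) (tmap inl b)
| tr_r a b : @rels Q a b -> tens_rel (tmap inr a) (tmap inr b)
| tr_comm (x : gens P) (y : gens Q) :
    tens_rel (tmul (tgen (inl x)) (tgen (inr y))) (tmul (tgen (inr y)) (tgen (inl x))).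

Definition tens (P Q : pres) : pres := @Pres (gens P + gens Q)%type (@tens_rel P Q).

Definition ahom (P Q : pres) : Type := gens P -> term (gens Q).

Definition is_hom (P Q : pres) (f : ahom P Q) : Prop :=
  forall a b, rels a b -> peq Q (subst f a) (subst f b).

Definition heq (P Q : pres) (f g : ahom P Q) : Prop :=
  forall t : term (gens P), peq Q (subst f t) (subst g t).

(* composition: first f, then g *)
Definition comp (P Q R : pres) (f : ahom P Q) (g : ahom Q R) : ahom P R :=
  fun x => subst g (f x).

Definition idh (P : pres) : ahom P P := fun x => tgen x.
Arguments idh : clear implicits.

Definition tensh (P Q P' Q' : pres) (f : ahom P P') (g : ahom Q Q') :
  ahom (tens P Q) (tens P' Q') :=
  fun z => match z with
           | inl x => tmap inl (f x)
           | inr y => tmap inr (g y)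
           end.

Definition assoc (P Q R : pres) : ahom (tens (tens P Q) R) (tens P (tens Q R)) :=
  fun z => match z with
           | inl (inl x) => tgen (inl x)
           | inl (inr y) => tgen (inr (inl y))
           | inr w => tgen (inr (inr w))
           end.

Definition lunit (P : pres) : ahom P (tens kP P) := fun x => tgen (inr x).
Definition runit (P : pres) : ahom P (tens P kP) := fun x => tgen (inl x).

Definition unith (P : pres) : ahom kP P := fun e => match e with end.

Definition is_linmap (P Q : pres) (S : term (gens P) -> term (gens Q)) : Prop :=
  [/\ (forall a b, peq P a b -> peq Q (S a) (S b)),
      (forall a b, peq Q (S (tadd a b)) (tadd (S a) (S b))) &
      (forall (c : k) a, peq Q (S (tmul (tscal c) a)) (tmul (tscal c) (S a)))].

Definition is_bialgebra (A : pres) (D : ahom A (tens A A)) (e : ahom A kP) : Prop :=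
  [/\ is_hom D, is_hom e,
      heq (comp (comp D (tensh D (idh A))) (@assoc A A A)) (comp D (tensh (idh A) D)),
      heq (comp D (tensh e (idh A))) (@lunit A) &
      heq (comp D (tensh (idh A) e)) (@runit A)].

Definition is_bicomodule_algebra (A B Z : pres)
  (DA : ahom A (tens A A)) (eA : ahom A kP) (DB : ahom B (tens B B)) (eB : ahom B kP)
  (alpha : ahom Z (tens A Z)) (beta : ahom Z (tens Z B)) : Prop :=
  [/\ is_hom alpha, is_hom beta,
      heq (comp (comp alpha (tensh DA (idh Z))) (@assoc A A Z))
          (comp alpha (tensh (idh A) alpha))
      /\ heq (comp alpha (tensh eA (idh Z))) (@lunit Z),
      heq (comp (comp beta (tensh beta (idh B))) (@assoc Z B B))
          (comp beta (tensh (idh Z) DB))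
      /\ heq (comp beta (tensh (idh Z) eB)) (@runit Z) &
      heq (comp (comp beta (tensh alpha (idh B))) (@assoc A Z B))
          (comp alpha (tensh (idh A) beta))].

Definition hopf_galois_system (A B Z T : pres)
  (DA : ahom A (tens A A)) (eA : ahom A kP) (DB : ahom B (tens B B)) (eB : ahom B kP)
  (alpha : ahom Z (tens A Z)) (beta : ahom Z (tens Z B))
  (gamma : ahom A (tens Z T)) (delta : ahom B (tens T Z)) : Prop :=
  [/\
      [/\ nonzero A, nonzero B, nonzero Z & nonzero T],
      is_bialgebra DA eA /\ is_bialgebra DB eB,
      is_bicomodule_algebra DA eA DB eB alpha beta,
      [/\ is_hom gamma, is_hom delta,
          heq (comp (comp alpha (tensh gamma (idh Z))) (@assoc Z T Z))
              (comp beta (tensh (idh Z) delta)),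
          heq (comp (comp gamma (tensh alpha (idh T))) (@assoc A Z T))
              (comp DA (tensh (idh A) gamma)) &
          heq (comp delta (tensh (idh T) beta))
              (comp (comp DB (tensh delta (idh B))) (@assoc T Z B))] &
      exists S : term (gens T) -> term (gens Z),
        [/\ is_linmap S,
            (* m_Z (1_Z (x) S) gamma = u_Z eps_A *)
            exists Phi : term (gens (tens Z T)) -> term (gens Z),
              [/\ is_linmap Phi,
                  (forall (z : term (gens Z)) (t : term (gens T)),
                      peq Z (Phi (tmul (tmap inl z) (tmap inr t))) (tmul z (S t))) &
                  (forall a : term (gens A),
                      peq Z (Phi (subst gamma a)) (subst (comp eA (@unith Z)) a))] &
            (* m_Z (S (x) 1_Z) delta = u_Z eps_B *)
            exists Psi : term (gens (tens T Z)) -> term (gens Z),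
              [/\ is_linmap Psi,
                  (forall (t : term (gens T)) (z : term (gens Z)),
                      peq Z (Psi (tmul (tmap inl t) (tmap inr z))) (tmul (S t) z)) &
                  (forall b : term (gens B),
                      peq Z (Psi (subst delta b)) (subst (comp eB (@unith Z)) b))]]].

Arguments hopf_galois_system : clear implicits.

Inductive gen (m n : nat) : Type :=
| GU of 'I_m & 'I_n
| GV of 'I_m & 'I_n.

Definition tsum (X : Type) (p : nat) (f : 'I_p -> term X) : term X :=
  \big[@tadd X / tscal 0]_(l < p) f l.

Definition tkron (X : Type) (i j : nat) : term X := tscal (i == j)%:R.

(* relations  u tv = I_m,  v F tu E^-1 = I_m,  tv u = I_n,  F tu E^-1 v = I_n *)
Inductive HEF_rel (m n : nat) (E : 'M[k]_m) (F : 'M[k]_n) :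
  term (gen m n) -> term (gen m n) -> Prop :=
| hr1 (i j : 'I_m) :
    HEF_rel E F (tsum (fun l : 'I_n => tmul (tgen (GU i l)) (tgen (GV j l)))) (tkron _ i j)
| hr2 (i j : 'I_m) :
    HEF_rel E F
      (tsum (fun a : 'I_n => tsum (fun b : 'I_n => tsum (fun c : 'I_m =>
         tmul (tmul (tmul (tgen (GV i a)) (tscal (F a b))) (tgen (GU c b)))
              (tscal (invmx E c j))))))
      (tkron _ i j)
| hr3 (i j : 'I_n) :
    HEF_rel E F (tsum (fun l : 'I_m => tmul (tgen (GV l i)) (tgen (GU l j)))) (tkron _ i j)
| hr4 (i j : 'I_n) :
    HEF_rel E F
      (tsum (fun a : 'I_n => tsum (fun b : 'I_m => tsum (fun c : 'I_m =>
         tmul (tmul (tmul (tscal (F i a)) (tgen (GU b a))) (tscal (invmx E b c)))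
              (tgen (GV c j))))))
      (tkron _ i j).

Definition HP (m n : nat) (E : 'M[k]_m) (F : 'M[k]_n) : pres :=
  @Pres (gen m n) (@HEF_rel m n E F).

Definition comult (p q r : nat) (g : gen p r) : term (gen p q + gen q r) :=
  match g with
  | GU i j => tsum (fun l : 'I_q => tmul (tgen (inl (GU i l))) (tgen (inr (GU l j))))
  | GV i j => tsum (fun l : 'I_q => tmul (tgen (inl (GV i l))) (tgen (inr (GV l j))))
  end.

Definition counit (p : nat) (g : gen p p) : term Empty_set :=
  match g with
  | GU i j => tkron _ i j
  | GV i j => tkron _ i j
  end.

End HopfGalois.

Arguments peq {k} P _ _.
Arguments idh {k} P _.
Arguments hopf_galois_system {k} A B Z T DA eA DB eB alpha beta gamma delta.
Arguments comult {k} p q r g.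
Arguments counit {k} p g.
Arguments HP {k} m n E F.

(* Each presented algebra is realised as the quotient ring of its free term
   algebra, so a map given on generators extends to the presented algebra as
   soon as it respects the relations.  For H(E,F) these say that the matrices
   (u, v) satisfy u v^T = I, v F u^T E^-1 = I, v^T u = I and F u^T E^-1 v = I.
   If (u1, v1) and (u2, v2) are such solutions with mutually commuting entries,
   then so is (u1 u2, v1 v2): this makes every comultiplication u |-> u (x) u,
   v |-> v (x) v an algebra map, and coassociativity and the counit laws are
   checked on generators.
   The antipode S : H(F,E) -> H(E,F), u |-> v^T, v |-> F u^T E^-1, is an algebra
   map into the opposite algebra of Z = H(E,F), where the relations of H(F,E)
   become transposes of those of Z.  The linear maps m(1 (x) S) and m(S (x) 1)
   come from letting Z (x) T act on Z by z (x) t : x |-> z x S(t) (and T (x) Z by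
   x |-> S(t) x z), a ring map into the additive endomorphisms of Z, evaluated
   at 1; on the generators of H(E) and H(F) the required identities are again
   the four relations of Z.  These ring maps into non-zero rings also show that
   T, Z (x) T and T (x) Z are non-zero, hence so are H(E) and H(F). *)

From Pilot Require Import Defs.
From HB Require Import structures.
From mathcomp Require Import all_boot all_algebra.
From mathcomp Require Import boolp generic_quotient.

Set Implicit Arguments.
Unset Strict Implicit.
Unset Printing Implicit Defensive.

Import GRing.Theory.
Local Open Scope ring_scope.
Local Open Scope quotient_scope.

Section QuotientRing.
Variables (k : fieldType) (X : Type) (R : @term k X -> @term k X -> Prop).
Local Notation term := (@term k X).

HB.instance Definition _ := gen_eqMixin term.
HB.instance Definition _ := gen_choiceMixin term.

Definition teqb : rel term := fun a b => `[< teq R a b >].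

Lemma teqb_equiv : equiv_class_of teqb.
Proof.
split=> [a | a b | b a c /asboolP ab /asboolP bc].
- by apply/asboolP; exact: teq_refl.
- by apply/asboolP/asboolP; exact: teq_sym.
- by apply/asboolP; exact: teq_trans ab bc.
Qed.

Canonical teq_equiv_rel := EquivRelPack teqb_equiv.

Definition qalg := {eq_quot teq_equiv_rel}.
HB.instance Definition _ := Choice.on qalg.

Definition qpi : term -> qalg := \pi.

Lemma qpi_eq a b : qpi a = qpi b <-> teq R a b.
Proof. by split=> [/eqmodP/asboolP | ab]; last apply/eqmodP/asboolP. Qed.

Lemma qpiK (x : qalg) : qpi (repr x) = x.
Proof. exact: reprK. Qed.

Lemma qpiW (P : qalg -> Prop) : (forall a, P (qpi a)) -> forall x, P x.
Proof. by move=> Pa x; rewrite -[x]qpiK. Qed.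

Lemma teq_repr a : teq R (repr (qpi a)) a.
Proof. by apply/qpi_eq; rewrite qpiK. Qed.

Definition qadd (x y : qalg) := qpi (tadd (repr x) (repr y)).
Definition qmul (x y : qalg) := qpi (tmul (repr x) (repr y)).
Definition qopp (x : qalg) := qpi (tmul (tscal _ (-1)) (repr x)).

Lemma qaddE a b : qadd (qpi a) (qpi b) = qpi (tadd a b).
Proof. by apply/qpi_eq; apply: teq_add; apply: teq_repr. Qed.

Lemma qmulE a b : qmul (qpi a) (qpi b) = qpi (tmul a b).
Proof. by apply/qpi_eq; apply: teq_mul; apply: teq_repr. Qed.

Lemma qoppE a : qopp (qpi a) = qpi (tmul (tscal _ (-1)) a).
Proof. by apply/qpi_eq; apply: teq_mul; [apply: teq_refl | apply: teq_repr]. Qed.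

Lemma qaddA : associative qadd.
Proof. by do 3!elim/qpiW=> ?; rewrite !qaddE; apply/qpi_eq; exact: teq_addA. Qed.

Lemma qaddC : commutative qadd.
Proof. by do 2!elim/qpiW=> ?; rewrite !qaddE; apply/qpi_eq; exact: teq_addC. Qed.

Lemma qadd0 : left_id (qpi (tscal _ 0)) qadd.
Proof. by elim/qpiW=> ?; rewrite !qaddE; apply/qpi_eq; exact: teq_add0. Qed.

Lemma qaddN : left_inverse (qpi (tscal _ 0)) qopp qadd.
Proof.
elim/qpiW=> a; rewrite qoppE qaddE; apply/qpi_eq.
exact: teq_trans (teq_addC _ _ _) (teq_addN _ _).
Qed.

Lemma qmulA : associative qmul.
Proof. by do 3!elim/qpiW=> ?; rewrite !qmulE; apply/qpi_eq; exact: teq_mulA. Qed.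

Lemma qmul1 : left_id (qpi (tscal _ 1)) qmul.
Proof. by elim/qpiW=> ?; rewrite !qmulE; apply/qpi_eq; exact: teq_mul1l. Qed.

Lemma qmulr1 : right_id (qpi (tscal _ 1)) qmul.
Proof. by elim/qpiW=> ?; rewrite !qmulE; apply/qpi_eq; exact: teq_mul1r. Qed.

Lemma qmulDl : left_distributive qmul qadd.
Proof.
by do 3!elim/qpiW=> ?; rewrite !(qaddE, qmulE); apply/qpi_eq; exact: teq_mulDl.
Qed.

Lemma qmulDr : right_distributive qmul qadd.
Proof.
by do 3!elim/qpiW=> ?; rewrite !(qaddE, qmulE); apply/qpi_eq; exact: teq_mulDr.
Qed.

HB.instance Definition _ := GRing.isPzRing.Build qalg
  qaddA qaddC qadd0 qaddN qmulA qmul1 qmulr1 qmulDl qmulDr.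

Lemma qpiD a b : qpi (tadd a b) = qpi a + qpi b.
Proof. by rewrite -qaddE. Qed.

Lemma qpiM a b : qpi (tmul a b) = qpi a * qpi b.
Proof. by rewrite -qmulE. Qed.

Definition qscal (c : k) : qalg := qpi (tscal _ c).

Lemma qscal_is_nmod_morphism : nmod_morphism qscal.
Proof. by split=> // c d; rewrite -qpiD; apply/qpi_eq/teq_sym/teq_scalD. Qed.

Lemma qscal_is_monoid_morphism : monoid_morphism qscal.
Proof. by split=> // c d; rewrite -qpiM; apply/qpi_eq/teq_sym/teq_scalM. Qed.

HB.instance Definition _ := GRing.isNmodMorphism.Build k qalg qscal
  qscal_is_nmod_morphism.
HB.instance Definition _ := GRing.isMonoidMorphism.Build k qalg qscal
  qscal_is_monoid_morphism.

Lemma qpi_tsum p (f : 'I_p -> term) : qpi (tsum f) = \sum_l qpi (f l).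
Proof. exact: (big_morph qpi qpiD (erefl (qpi (tscal _ 0)))). Qed.

Lemma qpi_tkron i j : qpi (tkron _ i j) = (i == j)%:R.
Proof. exact: (rmorph_nat qscal). Qed.

Lemma qscal_comm c x : GRing.comm (qscal c) x.
Proof. by elim/qpiW: x => a; rewrite /GRing.comm -!qpiM; apply/qpi_eq/teq_scalC. Qed.

End QuotientRing.

Section Interpretation.
Variable k : fieldType.
Local Notation term := (@term k).

Fixpoint interp (X : Type) (Rg : pzRingType) (s : k -> Rg) (g : X -> Rg)
    (t : term X) : Rg :=
  match t with
  | tgen x => g x
  | tscal c => s c
  | tadd a b => interp s g a + interp s g b
  | tmul a b => interp s g a * interp s g b
  end.

Lemma interp_subst (X Y : Type) (Rg : pzRingType) (s : k -> Rg) (g : X -> Rg)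
    (f : Y -> term X) t :
  interp s g (subst f t) = interp s (fun y => interp s g (f y)) t.
Proof. by elim: t => //= a -> b ->. Qed.

Lemma interp_morph (X : Type) (R1 R2 : pzRingType) (s1 : k -> R1) (s2 : k -> R2)
    (f : R1 -> R2) (g : X -> R1) :
    {morph f : x y / x + y} -> {morph f : x y / x * y} -> (forall c, f (s1 c) = s2 c) ->
  forall t, interp s2 (fun x => f (g x)) t = f (interp s1 g t).
Proof. by move=> fD fM fs; elim=> //= a -> b ->; rewrite ?fD ?fM. Qed.

Section RingMorphismScalars.
Variables (X : Type) (Rg : pzRingType) (s : {rmorphism k -> Rg}) (g : X -> Rg).

Lemma interp_tsum p (f : 'I_p -> term X) :
  interp s g (tsum f) = \sum_l interp s g (f l).
Proof.
by rewrite /tsum (big_morph (interp s g) (fun _ _ => erefl)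
  (rmorph0 s : interp s g (tscal X 0) = 0)).
Qed.

Lemma interp_tkron i j : interp s g (tkron X i j) = (i == j)%:R.
Proof. exact: rmorph_nat. Qed.

Hypothesis s_comm : forall c x, GRing.comm (s c) (g x).

Lemma interp_scal_comm c t : GRing.comm (s c) (interp s g t).
Proof.
elim: t => [x | d | a IHa b IHb | a IHa b IHb] /=.
- exact: s_comm.
- by rewrite /GRing.comm -!rmorphM mulrC.
- exact: commrD.
- exact: commrM.
Qed.

Lemma interp_teq (R : term X -> term X -> Prop) :
    (forall a b, R a b -> interp s g a = interp s g b) ->
  forall a b, teq R a b -> interp s g a = interp s g b.
Proof.
move=> hR a b; elim=> {a b} /=.
- exact: hR.
- by [].
- by move=> a b _ ->.
- by move=> a b c _ -> _ ->.
- by move=> a a' b b' _ -> _ ->.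
- by move=> a a' b b' _ -> _ ->.
- by move=> a b c; rewrite addrA.
- by move=> a b; rewrite addrC.
- by move=> a; rewrite rmorph0 add0r.
- by move=> a; rewrite rmorphN1 mulN1r subrr rmorph0.
- by move=> a b c; rewrite mulrA.
- by move=> a; rewrite rmorph1 mul1r.
- by move=> a; rewrite rmorph1 mulr1.
- by move=> a b c; rewrite mulrDl.
- by move=> a b c; rewrite mulrDr.
- by move=> c d; rewrite rmorphD.
- by move=> c d; rewrite rmorphM.
- by move=> c a; apply: interp_scal_comm.
Qed.

End RingMorphismScalars.

Lemma qpi_interp (X : Type) (R : term X -> term X -> Prop) t :
  qpi R t = interp (qscal R) (fun x => qpi R (tgen x)) t.
Proof. by elim: t => //= a <- b <-; rewrite -?qpiD -?qpiM. Qed.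

Lemma qpi_subst (X Y : Type) (R : term X -> term X -> Prop) (f : Y -> term X) t :
  qpi R (subst f t) = interp (qscal R) (fun y => qpi R (f y)) t.
Proof. by elim: t => //= a <- b <-; rewrite -?qpiD -?qpiM. Qed.

End Interpretation.

Section PresentedAlgebras.
Variable k : fieldType.
Local Notation pres := (@pres k).
Local Notation term := (@term k).

Lemma nonzero_interp (P : pres) (Rg : pzRingType) (s : {rmorphism k -> Rg})
    (g : gens P -> Rg) :
    (forall a b, peq P a b -> interp s g a = interp s g b) -> (1 : Rg) != 0 ->
  nonzero P.
Proof. by move=> hP nz /hP /=; rewrite rmorph1 rmorph0 => e; rewrite e eqxx in nz. Qed.

Lemma is_homE (P Q : pres) (f : ahom P Q) :
  is_hom f <-> forall a b, rels a b ->
    interp (qscal _) (fun x => qpi (@rels k Q) (f x)) a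
    = interp (qscal _) (fun x => qpi (@rels k Q) (f x)) b.
Proof.
split=> hf a b /hf; rewrite -!qpi_subst; first by move/qpi_eq.
by move=> e; apply/qpi_eq.
Qed.

Lemma hom_peq (P Q : pres) (f : ahom P Q) : is_hom f ->
  forall a b, peq P a b -> peq Q (subst f a) (subst f b).
Proof.
move=> /is_homE hf a b ab; apply/qpi_eq; rewrite !qpi_subst.
by apply: interp_teq hf _ _ ab => c x; exact: qscal_comm.
Qed.

Lemma nonzero_hom (P Q : pres) (f : ahom P Q) : is_hom f -> nonzero Q -> nonzero P.
Proof. by move=> /hom_peq hf nzQ /hf. Qed.

Lemma heq_gens (P Q : pres) (f g : ahom P Q) :
  (forall x, qpi (@rels k Q) (f x) = qpi (@rels k Q) (g x)) -> heq f g.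
Proof.
move=> /(@funext _ _ (fun x => qpi _ (f x))) fg t.
by apply/qpi_eq; rewrite !qpi_subst fg.
Qed.

Lemma heq_sym (P Q : pres) (f g : ahom P Q) : heq f g -> heq g f.
Proof. by move=> fg t; apply/teq_sym/fg. Qed.

Lemma is_linmap_repr (P Q : pres) (f : term (gens P) -> qalg (@rels k Q)) :
    (forall a b, peq P a b -> f a = f b) ->
    (forall a b, f (tadd a b) = f a + f b) ->
    (forall c a, f (tmul (tscal _ c) a) = qscal _ c * f a) ->
  is_linmap (fun t => repr (f t)).
Proof.
move=> fP fD fZ; split=> [a b /fP fab | a b | c a]; apply/qpi_eq.
- by rewrite fab.
- by rewrite qpiD !qpiK fD.
- by rewrite qpiM !qpiK fZ.
Qed.

Lemma qalg1_neq0 (P : pres) : nonzero P -> (1 : qalg (@rels k P)) != 0.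
Proof. by move=> nzP; apply/eqP => /qpi_eq. Qed.

End PresentedAlgebras.

Section ConverseScalars.
Variables (K : comPzRingType) (S : pzRingType) (f : {rmorphism K -> S}).

Definition conv_rmorph : K -> S^c := f.

Lemma conv_rmorph_is_monoid_morphism : monoid_morphism conv_rmorph.
Proof. by split=> [|a b]; rewrite /conv_rmorph ?rmorph1 // mulrC rmorphM. Qed.

HB.instance Definition _ := GRing.isNmodMorphism.Build K S^c conv_rmorph
  (rmorph0 f, rmorphD f).
HB.instance Definition _ := GRing.isMonoidMorphism.Build K S^c conv_rmorph
  conv_rmorph_is_monoid_morphism.

End ConverseScalars.

Lemma commr_conv (R : pzRingType) (x y : R) : GRing.comm x y -> GRing.comm (x : R^c) y.
Proof. exact: esym. Qed.

Lemma mulmx_conv (R : pzRingType) a b c (P : 'M[R^c]_(a, b)) (Q : 'M[R^c]_(b, c)) :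
  P *m Q = ((Q^T : 'M[R]_(c, b)) *m (P^T : 'M[R]_(b, a)))^T.
Proof. by rewrite trmx_mul_rev !trmxK. Qed.

Section Solutions.
Variables (k : fieldType) (Rg : pzRingType) (s : {rmorphism k -> Rg}).
Hypothesis s_central : forall c x, GRing.comm (s c) x.
Local Notation mxs A := (map_mx s A).

Definition HEF_solution p r (A : 'M[k]_p) (C : 'M[k]_r) (U V : 'M[Rg]_(p, r)) :=
  [/\ U *m V^T = 1%:M, V *m mxs C *m U^T *m mxs (invmx A) = 1%:M,
      V^T *m U = 1%:M & mxs C *m U^T *m mxs (invmx A) *m V = 1%:M].

Definition umx p r (g : gen p r -> Rg) : 'M[Rg]_(p, r) := \matrix_(i, j) g (GU i j).
Definition vmx p r (g : gen p r -> Rg) : 'M[Rg]_(p, r) := \matrix_(i, j) g (GV i j).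

Lemma umxE p r (g : gen p r -> Rg) i j : umx g i j = g (GU i j).
Proof. exact: mxE. Qed.

Lemma vmxE p r (g : gen p r -> Rg) i j : vmx g i j = g (GV i j).
Proof. exact: mxE. Qed.

Lemma mulmx3E n1 n2 n3 n4 n5 (A : 'M[Rg]_(n1, n2)) (B : 'M[Rg]_(n2, n3))
    (C : 'M[Rg]_(n3, n4)) (D : 'M[Rg]_(n4, n5)) i j :
  (A *m B *m C *m D) i j = \sum_a \sum_b \sum_c A i a * (B a b * (C b c * D c j)).
Proof.
rewrite -!mulmxA mxE; apply: eq_bigr => a _.
rewrite mxE mulr_sumr; apply: eq_bigr => b _.
by rewrite mxE !mulr_sumr.
Qed.

Lemma interp_HEF_rel p r (A : 'M[k]_p) (C : 'M[k]_r) (g : gen p r -> Rg) :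
  (forall a b, HEF_rel A C a b -> interp s g a = interp s g b)
  <-> HEF_solution A C (umx g) (vmx g).
Proof.
have e1 i j : interp s g (tsum (fun l => tmul (tgen (GU i l)) (tgen (GV j l))))
    = (umx g *m (vmx g)^T) i j.
  by rewrite interp_tsum mxE; apply: eq_bigr => l _; rewrite !(mxE, umxE, vmxE).
have e2 i j : interp s g (tsum (fun a => tsum (fun b => tsum (fun c =>
      tmul (tmul (tmul (tgen (GV i a)) (tscal _ (C a b))) (tgen (GU c b)))
           (tscal _ (invmx A c j))))))
    = (vmx g *m mxs C *m (umx g)^T *m mxs (invmx A)) i j.
  rewrite mulmx3E interp_tsum; apply: eq_bigr => a _.
  rewrite interp_tsum; apply: eq_bigr => b _.
  by rewrite interp_tsum; apply: eq_bigr => c _; rewrite !(mxE, umxE, vmxE) /= !mulrA.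
have e3 i j : interp s g (tsum (fun l => tmul (tgen (GV l i)) (tgen (GU l j))))
    = ((vmx g)^T *m umx g) i j.
  by rewrite interp_tsum mxE; apply: eq_bigr => l _; rewrite !(mxE, umxE, vmxE).
have e4 i j : interp s g (tsum (fun a => tsum (fun b => tsum (fun c =>
      tmul (tmul (tmul (tscal _ (C i a)) (tgen (GU b a))) (tscal _ (invmx A b c)))
           (tgen (GV c j))))))
    = (mxs C *m (umx g)^T *m mxs (invmx A) *m vmx g) i j.
  rewrite mulmx3E interp_tsum; apply: eq_bigr => a _.
  rewrite interp_tsum; apply: eq_bigr => b _.
  by rewrite interp_tsum; apply: eq_bigr => c _; rewrite !(mxE, umxE, vmxE) /= !mulrA.
have unitP n (M : 'M[Rg]_n) :
    M = 1%:M <-> forall i j, M i j = interp s g (tkron _ i j).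
  by split=> [-> i j | eM]; [|apply/matrixP => i j]; rewrite ?eM interp_tkron mxE.
split=> [hR | [/unitP h1 /unitP h2 /unitP h3 /unitP h4] a b []] /=.
  by split; apply/unitP => i j; [rewrite -e1 | rewrite -e2 | rewrite -e3 | rewrite -e4];
    apply/hR; constructor.
- by move=> i j; rewrite e1 h1.
- by move=> i j; rewrite e2 h2.
- by move=> i j; rewrite e3 h3.
- by move=> i j; rewrite e4 h4.
Qed.

Lemma trmx_mul_comm n1 n2 n3 (A : 'M[Rg]_(n1, n2)) (B : 'M[Rg]_(n2, n3)) :
  (forall i l j, GRing.comm (A i l) (B l j)) -> (A *m B)^T = B^T *m A^T.
Proof.
by move=> AB; apply/matrixP => i j; rewrite !mxE; apply: eq_bigr => l _; rewrite !mxE AB.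
Qed.

Lemma trmx_mul_mxsl p q r (A : 'M[k]_(p, q)) (P : 'M[Rg]_(q, r)) :
  (mxs A *m P)^T = P^T *m (mxs A)^T.
Proof. by apply: trmx_mul_comm => i l j; rewrite mxE; exact: s_central. Qed.

Lemma trmx_mul_mxsr p q r (P : 'M[Rg]_(p, q)) (A : 'M[k]_(q, r)) :
  (P *m mxs A)^T = (mxs A)^T *m P^T.
Proof. by apply: trmx_mul_comm => i l j; rewrite mxE; symmetry; exact: s_central. Qed.

Lemma HEF_solution_mul p q r (A : 'M[k]_p) (B : 'M[k]_q) (C : 'M[k]_r)
    (U1 V1 : 'M[Rg]_(p, q)) (U2 V2 : 'M[Rg]_(q, r)) :
    B \in unitmx ->
    (forall i j a b, [/\ GRing.comm (U1 i j) (U2 a b), GRing.comm (U1 i j) (V2 a b),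
                         GRing.comm (V1 i j) (U2 a b) & GRing.comm (V1 i j) (V2 a b)]) ->
    HEF_solution A B U1 V1 -> HEF_solution B C U2 V2 ->
  HEF_solution A C (U1 *m U2) (V1 *m V2).
Proof.
move=> B_unit comm12 [h11 h12 h13 h14] [h21 h22 h23 h24].
have tU : (U1 *m U2)^T = U2^T *m U1^T.
  by apply: trmx_mul_comm => i l j; case: (comm12 i l l j).
have tV : (V1 *m V2)^T = V2^T *m V1^T.
  by apply: trmx_mul_comm => i l j; case: (comm12 i l l j).
have VCU2 : V2 *m mxs C *m U2^T = mxs B.
  by rewrite -[LHS]mulmx1 -(map_mx1 s) -(mulVmx B_unit) map_mxM !mulmxA h22 mul1mx.
have UAV1 : U1^T *m mxs (invmx A) *m V1 = mxs (invmx B).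
  by rewrite -[RHS]mulmx1 -h14 !mulmxA -map_mxM mulVmx // map_mx1 mul1mx.
split.
- by rewrite tV mulmxA -(mulmxA U1) h21 mulmx1 h11.
- by rewrite tU -!mulmxA (mulmxA V2) (mulmxA (V2 *m _)) VCU2 !mulmxA h12.
- by rewrite tV -mulmxA (mulmxA V1^T) h13 mul1mx h23.
- by rewrite tU !mulmxA -(mulmxA _ U1^T) -(mulmxA _ _ V1) UAV1 h24.
Qed.

Lemma HEF_solution1 p (A : 'M[k]_p) : A \in unitmx -> HEF_solution A A 1%:M 1%:M.
Proof.
move=> A_unit; rewrite /HEF_solution trmx1 !mulmx1 !mul1mx -map_mxM mulmxV //.
by rewrite map_mx1.
Qed.

End Solutions.

Lemma HEF_solution_conv (k : fieldType) (Rg : pzRingType) (s : {rmorphism k -> Rg})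
    p r (A : 'M[k]_p) (C : 'M[k]_r) (U V : 'M[Rg]_(p, r)) :
    V *m U^T = 1%:M -> map_mx s (invmx A)^T *m U *m map_mx s C^T *m V^T = 1%:M ->
    U^T *m V = 1%:M -> V^T *m map_mx s (invmx A)^T *m U *m map_mx s C^T = 1%:M ->
  HEF_solution (Rg := Rg^c) (conv_rmorph s) A C U V.
(* [Rg^c] is given explicitly: otherwise unification unfolds [conv_rmorph s] and
   picks the structure of [s] on [Rg]. *)
Proof.
have conv_mx n1 n2 (M : 'M[k]_(n1, n2)) : map_mx (conv_rmorph s) M = map_mx s M by [].
move=> h1 h2 h3 h4.
by split; rewrite !mulmx_conv ?trmxK ?conv_mx ?map_trmx ?mulmxA ?h1 ?h2 ?h3 ?h4;
  exact: trmx1.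
Qed.

Lemma subst_tsum (k : fieldType) (X Y : Type) (f : X -> @term k Y) p
    (g : 'I_p -> @term k X) :
  subst f (tsum g) = tsum (fun l => subst f (g l)).
Proof.
by rewrite /tsum (big_morph (subst f) (id1 := tscal _ 0) (op1 := @tadd _ _)).
Qed.

Lemma sum_mulA (R : pzSemiRingType) n1 n2 (x : 'I_n1 -> R) (Y : 'I_n1 -> 'I_n2 -> R)
    (z : 'I_n2 -> R) :
  \sum_j (\sum_i x i * Y i j) * z j = \sum_i x i * \sum_j Y i j * z j.
Proof.
under eq_bigr do rewrite mulr_suml.
rewrite exchange_big; apply: eq_bigr => i _; rewrite mulr_sumr.
by apply: eq_bigr => j _; rewrite mulrA.
Qed.

Lemma sum_kronl (R : pzSemiRingType) n (i : 'I_n) (y : 'I_n -> R) :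
  \sum_l (i == l)%:R * y l = y i.
Proof.
rewrite (bigD1 i) //= eqxx mul1r big1 ?addr0 // => l /negbTE ne.
by rewrite eq_sym ne mul0r.
Qed.

Lemma sum_kronr (R : pzSemiRingType) n (j : 'I_n) (y : 'I_n -> R) :
  \sum_l y l * (l == j)%:R = y j.
Proof.
rewrite (bigD1 j) //= eqxx mulr1 big1 ?addr0 // => l /negbTE ne.
by rewrite ne mulr0.
Qed.

Section Comultiplication.
Variable k : fieldType.
Local Notation pres := (@pres k).

Lemma is_hom_solution p r (A : 'M[k]_p) (C : 'M[k]_r) (Q : pres)
    (f : ahom (HP p r A C) Q) :
  is_hom f <-> HEF_solution (qscal _) A C (umx (fun x => qpi (@rels k Q) (f x)))
                                          (vmx (fun x => qpi (@rels k Q) (f x))).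
Proof. rewrite is_homE; exact: interp_HEF_rel. Qed.

Lemma inl_hom (P Q : pres) : is_hom (fun x => tgen (inl x) : term (gens (tens P Q))).
Proof. by move=> a b ab; apply/teq_rel/tr_l. Qed.

Lemma inr_hom (P Q : pres) : is_hom (fun y => tgen (inr y) : term (gens (tens P Q))).
Proof. by move=> a b ab; apply/teq_rel/tr_r. Qed.

Lemma tens_gens_comm (P Q : pres) (x : gens P) (y : gens Q) :
  GRing.comm (qpi (@rels k (tens P Q)) (tgen (inl x))) (qpi _ (tgen (inr y))).
Proof. by rewrite /GRing.comm -!qpiM; apply/qpi_eq/teq_rel/tr_comm. Qed.

Lemma comult_hom p q r (A : 'M[k]_p) (B : 'M[k]_q) (C : 'M[k]_r) : B \in unitmx ->
  is_hom (comult p q r : ahom (HP p r A C) (tens (HP p q A B) (HP q r B C))).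
Proof.
move=> B_unit; apply/is_hom_solution.
pose T := tens (HP p q A B) (HP q r B C).
pose g1 (x : gen p q) := qpi (@rels k T) (tgen (inl x)).
pose g2 (y : gen q r) := qpi (@rels k T) (tgen (inr y)).
have sol1 : HEF_solution (qscal _) A B (umx g1) (vmx g1) by apply/is_hom_solution/inl_hom.
have sol2 : HEF_solution (qscal _) B C (umx g2) (vmx g2) by apply/is_hom_solution/inr_hom.
have -> : umx (fun x => qpi _ (comult p q r x)) = umx g1 *m umx g2.
  by apply/matrixP => i j; rewrite umxE mxE qpi_tsum; apply: eq_bigr => l _;
    rewrite qpiM !umxE.
have -> : vmx (fun x => qpi _ (comult p q r x)) = vmx g1 *m vmx g2.
  by apply/matrixP => i j; rewrite vmxE mxE qpi_tsum; apply: eq_bigr => l _;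
    rewrite qpiM !vmxE.
apply: HEF_solution_mul B_unit _ sol1 sol2 => i j a b.
by rewrite !(umxE, vmxE); split; apply: tens_gens_comm.
Qed.

Lemma counit_hom p (A : 'M[k]_p) : A \in unitmx ->
  is_hom (counit p : ahom (HP p p A A) kP).
Proof.
move=> A_unit; apply/is_hom_solution.
have eps_kron (i j : 'I_p) : qpi (@rels k kP) (tkron _ i j) = (1%:M : 'M_p) i j.
  by rewrite qpi_tkron mxE.
have -> : umx (fun x => qpi (@rels k kP) (counit p x)) = 1%:M.
  by apply/matrixP => i j; rewrite umxE eps_kron.
have -> : vmx (fun x => qpi (@rels k kP) (counit p x)) = 1%:M.
  by apply/matrixP => i j; rewrite vmxE eps_kron.
exact: HEF_solution1.
Qed.

Lemma comult_coassoc p q r t (A : 'M[k]_p) (B : 'M[k]_q) (C : 'M[k]_r) (D : 'M[k]_t) :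
  heq (Defs.comp
         (Defs.comp (comult p q t : ahom (HP p t A D) (tens (HP p q A B) (HP q t B D)))
            (tensh (comult p r q : ahom (HP p q A B) (tens (HP p r A C) (HP r q C B)))
                   (idh (HP q t B D))))
         (@assoc _ (HP p r A C) (HP r q C B) (HP q t B D)))
      (Defs.comp (comult p r t : ahom (HP p t A D) (tens (HP p r A C) (HP r t C D)))
         (tensh (idh (HP p r A C))
                (comult r q t : ahom (HP r t C D) (tens (HP r q C B) (HP q t B D))))).
Proof.
apply: heq_gens => -[] i j; rewrite /Defs.comp /= !subst_tsum !qpi_tsum.
all: under eq_bigr do rewrite /= qpiM /tmap !subst_tsum !qpi_tsum.
all: under eq_bigr do under eq_bigr do rewrite qpiM.
all: under [RHS]eq_bigr do rewrite /= qpiM /tmap subst_tsum qpi_tsum.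
all: under [RHS]eq_bigr do under eq_bigr do rewrite qpiM.
all: exact: sum_mulA.
Qed.

Lemma comult_counitl p r (A : 'M[k]_p) (C : 'M[k]_r) :
  heq (Defs.comp (comult p p r : ahom (HP p r A C) (tens (HP p p A A) (HP p r A C)))
                 (tensh (counit p : ahom (HP p p A A) kP) (idh (HP p r A C))))
      (@lunit _ (HP p r A C)).
Proof.
apply: heq_gens => -[] i j; rewrite /Defs.comp /= !subst_tsum !qpi_tsum.
all: under eq_bigr do rewrite qpiM qpi_tkron.
all: exact: sum_kronl.
Qed.

Lemma comult_counitr p r (A : 'M[k]_p) (C : 'M[k]_r) :
  heq (Defs.comp (comult p r r : ahom (HP p r A C) (tens (HP p r A C) (HP r r C C)))
                 (tensh (idh (HP p r A C)) (counit r : ahom (HP r r C C) kP)))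
      (@runit _ (HP p r A C)).
Proof.
apply: heq_gens => -[] i j; rewrite /Defs.comp /= !subst_tsum !qpi_tsum.
all: under eq_bigr do rewrite qpiM qpi_tkron.
all: exact: sum_kronr.
Qed.

Definition counit_val p (x : gen p p) : k :=
  match x with GU i j | GV i j => (i == j)%:R end.

Lemma qpi_counit (P : pres) p (A : 'M[k]_p) a :
  qpi (@rels k P) (subst (Defs.comp (counit p : ahom (HP p p A A) kP) (unith P)) a)
  = qscal _ (interp idfun (@counit_val p) a).
Proof.
have eps_val x : qpi (@rels k P) (Defs.comp (counit p : ahom (HP p p A A) kP) (unith P) x)
    = qscal _ (counit_val x) by case: x.
rewrite qpi_subst (funext eps_val).
by apply: interp_morph => //; [exact: rmorphD | exact: rmorphM].
Qed.

End Comultiplication.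

Arguments counit_val {k p}.

Section AdditiveEndomorphisms.
Variable V : zmodType.

Record aend := AEnd { aend_fun :> V -> V; aendD : {morph aend_fun : x y / x + y} }.

HB.instance Definition _ := gen_eqMixin aend.
HB.instance Definition _ := gen_choiceMixin aend.

Lemma aend_ext (f g : aend) : f =1 g -> f = g.
Proof.
case: f g => [f fD] [g gD] /= /funext efg; move: gD; rewrite -efg => gD.
by rewrite (Prop_irrelevance fD gD).
Qed.

Definition aend_zero := @AEnd (fun _ => 0) (fun _ _ => esym (addr0 0)).

Lemma aend_add_subproof (f g : aend) : {morph (fun x => f x + g x) : x y / x + y}.
Proof. by move=> x y; rewrite !aendD addrACA. Qed.

Lemma aend_opp_subproof (f : aend) : {morph (fun x => - f x) : x y / x + y}.
Proof. by move=> x y; rewrite aendD opprD. Qed.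

Lemma aend_mul_subproof (f g : aend) : {morph (fun x => f (g x)) : x y / x + y}.
Proof. by move=> x y; rewrite !aendD. Qed.

Definition aend_add f g := AEnd (aend_add_subproof f g).
Definition aend_opp f := AEnd (aend_opp_subproof f).
Definition aend_one := @AEnd id (fun _ _ => erefl).
Definition aend_mul f g := AEnd (aend_mul_subproof f g).

Lemma aend_addA : associative aend_add.
Proof. by move=> f g h; apply: aend_ext => x /=; rewrite addrA. Qed.

Lemma aend_addC : commutative aend_add.
Proof. by move=> f g; apply: aend_ext => x /=; rewrite addrC. Qed.

Lemma aend_add0 : left_id aend_zero aend_add.
Proof. by move=> f; apply: aend_ext => x /=; rewrite add0r. Qed.

Lemma aend_addN : left_inverse aend_zero aend_opp aend_add.
Proof. by move=> f; apply: aend_ext => x /=; rewrite addNr. Qed.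

Lemma aend_mulA : associative aend_mul.
Proof. by move=> f g h; apply: aend_ext. Qed.

Lemma aend_mul1 : left_id aend_one aend_mul.
Proof. by move=> f; apply: aend_ext. Qed.

Lemma aend_mulr1 : right_id aend_one aend_mul.
Proof. by move=> f; apply: aend_ext. Qed.

Lemma aend_mulDl : left_distributive aend_mul aend_add.
Proof. by move=> f g h; apply: aend_ext. Qed.

Lemma aend_mulDr : right_distributive aend_mul aend_add.
Proof. by move=> f g h; apply: aend_ext => x /=; rewrite aendD. Qed.

HB.instance Definition _ := GRing.isPzRing.Build aend aend_addA aend_addC aend_add0
  aend_addN aend_mulA aend_mul1 aend_mulr1 aend_mulDl aend_mulDr.

Lemma aend_addE (f g : aend) x : (f + g) x = f x + g x. Proof. by []. Qed.
Lemma aend_mulE (f g : aend) x : (f * g) x = f (g x). Proof. by []. Qed.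

Lemma aend_sumE p (f : 'I_p -> aend) x : (\sum_l f l) x = \sum_l f l x.
Proof. by apply: (big_morph (fun f : aend => f x)) => // f g; rewrite aend_addE. Qed.

End AdditiveEndomorphisms.

Section MultiplicationOperators.
Variable V : pzRingType.

Definition lmul (v : V) : aend V := @AEnd _ (fun x => v * x) (mulrDr v).
Definition rmul (v : V) : aend V := @AEnd _ (fun x => x * v) (fun x y => mulrDl x y v).

Lemma lmulD : {morph lmul : u v / u + v}.
Proof. by move=> u v; apply: aend_ext => x /=; rewrite mulrDl. Qed.

Lemma rmulD : {morph rmul : u v / u + v}.
Proof. by move=> u v; apply: aend_ext => x /=; rewrite mulrDr. Qed.

Lemma lmulM u v : lmul (u * v) = lmul u * lmul v.
Proof. by apply: aend_ext => x /=; rewrite mulrA. Qed.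

Lemma lmul0 : lmul 0 = 0.
Proof. by apply: aend_ext => x /=; rewrite mul0r. Qed.

Lemma lmul1 : lmul 1 = 1.
Proof. by apply: aend_ext => x /=; rewrite mul1r. Qed.

HB.instance Definition _ := GRing.isNmodMorphism.Build V (aend V) lmul (lmul0, lmulD).
HB.instance Definition _ := GRing.isMonoidMorphism.Build V (aend V) lmul (lmul1, lmulM).

Lemma rmulM u v : rmul (u * v) = rmul v * rmul u.
Proof. by apply: aend_ext => x; rewrite aend_mulE /= mulrA. Qed.

Lemma lmul_rmul_comm u v : GRing.comm (lmul u) (rmul v).
Proof. by apply: aend_ext => x; rewrite !aend_mulE /= mulrA. Qed.

Lemma aend1_neq0 : (1 : V) != 0 -> (1 : aend V) != 0.
Proof. by move=> /eqP nz; apply/eqP => /(congr1 (fun f : aend V => f 1)). Qed.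

End MultiplicationOperators.

Arguments lmul {V}.
Arguments rmul {V}.

Section EvaluationAtOne.
Variables (k : fieldType) (V : pzRingType) (sigma : {rmorphism k -> V}).
Variables (X : Type) (eps : X -> k).

Lemma interp_aend_at1 (g : X -> aend V) :
    (forall c x, GRing.comm ((lmul \o sigma) c) (g x)) ->
    (forall x, g x 1 = sigma (eps x)) ->
  forall t, interp (lmul \o sigma) g t 1 = sigma (interp idfun eps t).
Proof.
move=> g_comm g1; elim=> [x | c | a IHa b IHb | a IHa b IHb] /=.
- exact: g1.
- exact: mulr1.
- by rewrite IHa IHb rmorphD.
have := congr1 (fun f : aend V => f 1) (interp_scal_comm g_comm (interp idfun eps b) a).
by rewrite /= mulr1 IHa IHb => <-; rewrite -rmorphM mulrC.
Qed.

Lemma interp_conv_aend_at1 (g : X -> (aend V)^c) :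
    (forall c x, GRing.comm (conv_rmorph (lmul \o sigma) c) (g x)) ->
    (forall x, g x 1 = sigma (eps x)) ->
  forall t, interp (conv_rmorph (lmul \o sigma)) g t 1 = sigma (interp idfun eps t).
Proof.
move=> g_comm g1; elim=> [x | c | a IHa b IHb | a IHa b IHb] /=.
- exact: g1.
- exact: mulr1.
- by rewrite IHa IHb rmorphD.
have := congr1 (fun f : aend V => f 1) (interp_scal_comm g_comm (interp idfun eps a) b).
by rewrite /= mulr1 IHa IHb => ->; rewrite rmorphM.
Qed.

End EvaluationAtOne.

Section AntipodeMaps.
Variables (k : fieldType) (m n : nat) (E : 'M[k]_m) (F : 'M[k]_n).
Hypotheses (E_unit : E \in unitmx) (F_unit : F \in unitmx).
Local Notation Z := (HP m n E F).
Local Notation T := (HP n m F E).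
Local Notation QZ := (qalg (@rels k Z)).
Local Notation s := (qscal (@rels k Z)).
Local Notation mxs A := (map_mx s A).

Definition UZ : 'M[QZ]_(m, n) := umx (fun x => qpi _ (tgen x)).
Definition VZ : 'M[QZ]_(m, n) := vmx (fun x => qpi _ (tgen x)).
Definition XZ : 'M[QZ]_(n, m) := mxs F *m UZ^T *m mxs (invmx E).

Lemma Z_solution : HEF_solution s E F UZ VZ.
Proof. by apply/interp_HEF_rel => a b ab; rewrite -!qpi_interp; apply/qpi_eq/teq_rel. Qed.

Lemma VZ_XZ : VZ *m XZ = 1%:M.
Proof. by case: Z_solution => _ h2 _ _; rewrite /XZ !mulmxA. Qed.

Lemma XZ_VZ : XZ *m VZ = 1%:M.
Proof. by case: Z_solution. Qed.

Lemma trXZ : XZ^T = mxs (invmx E)^T *m UZ *m mxs F^T.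
Proof.
by rewrite /XZ trmx_mul_mxsr ?trmx_mul_mxsl ?trmxK ?map_trmx ?mulmxA //; exact: qscal_comm.
Qed.

Definition antipode_gen (y : gen n m) : QZ^c :=
  match y with GU i j => VZ j i | GV i j => XZ i j end.

Definition antipode (t : term (gen n m)) : QZ^c := interp (conv_rmorph s) antipode_gen t.

Lemma antipode_solution :
  HEF_solution (Rg := QZ^c) (conv_rmorph s) F E (umx antipode_gen) (vmx antipode_gen).
Proof.
case: Z_solution => h1 _ h3 _.
have -> : umx antipode_gen = VZ^T by apply/matrixP => i j; rewrite umxE mxE.
have -> : vmx antipode_gen = XZ by apply/matrixP => i j; rewrite vmxE.
apply: HEF_solution_conv; rewrite ?trmxK ?XZ_VZ ?VZ_XZ // trXZ.
- rewrite !mulmxA -(mulmxA _ (mxs E^T)) -map_mxM -trmx_mul mulVmx // trmx1 map_mx1.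
  rewrite mulmx1 -(mulmxA _ VZ^T) h3 mulmx1 -map_mxM -trmx_mul mulmxV //.
  by rewrite trmx1 map_mx1.
- rewrite -!mulmxA (mulmxA (mxs F^T)) -map_mxM -trmx_mul mulVmx // trmx1 map_mx1.
  rewrite mul1mx (mulmxA UZ) h1 mul1mx -map_mxM -trmx_mul mulmxV //.
  by rewrite trmx1 map_mx1.
Qed.

Lemma antipode_teq a b : peq T a b -> antipode a = antipode b.
Proof.
apply: interp_teq => [c y | ]; first by symmetry; exact: qscal_comm.
exact/interp_HEF_rel/antipode_solution.
Qed.

(* [phi (z (x) t)] is the operator [x |-> z x S(t)] on Z and [psi (t (x) z)] is
   [x |-> S(t) x z]; m(1 (x) S) and m(S (x) 1) are their values at 1. *)
Definition phi_gen (w : gen m n + gen n m) : aend QZ :=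
  match w with inl x => lmul (qpi _ (tgen x)) | inr y => rmul (antipode_gen y : QZ) end.

Definition phi (w : term (gen m n + gen n m)) : aend QZ := interp (lmul \o s) phi_gen w.

Definition psi_gen (w : gen n m + gen m n) : (aend QZ)^c :=
  match w with inl y => lmul (antipode_gen y : QZ) | inr x => rmul (qpi _ (tgen x)) end.

Definition psi (w : term (gen n m + gen m n)) : (aend QZ)^c :=
  interp (conv_rmorph (lmul \o s)) psi_gen w.

Lemma phiM a b : phi (tmul a b) = phi a * phi b.
Proof. by []. Qed.

Lemma psiM a b : psi (tmul a b) = (psi b : aend QZ) * psi a.
Proof. by []. Qed.

Lemma rmul_scal c : rmul (s c) = lmul (s c).
Proof. by apply: aend_ext => x /=; symmetry; exact: qscal_comm. Qed.

Lemma phi_inl z : phi (tmap inl z) = lmul (qpi _ z).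
Proof.
rewrite /phi /tmap interp_subst /= qpi_interp.
by apply: interp_morph => //; [exact: lmulD | exact: lmulM].
Qed.

Lemma phi_inr t : phi (tmap inr t) = rmul (antipode t : QZ).
Proof.
rewrite /phi /tmap interp_subst /=.
by apply: interp_morph => [u v | u v | c]; rewrite ?rmulD ?rmulM ?rmul_scal.
Qed.

Lemma psi_inl t : psi (tmap inl t) = lmul (antipode t : QZ).
Proof.
rewrite /psi /tmap interp_subst /=.
by apply: interp_morph => [u v | u v | c]; rewrite ?lmulD ?lmulM.
Qed.

Lemma psi_inr z : psi (tmap inr z) = rmul (qpi _ z).
Proof.
rewrite /psi /tmap interp_subst /= qpi_interp.
by apply: interp_morph => [u v | u v | c]; rewrite ?rmulD ?rmulM ?rmul_scal.
Qed.

Lemma phi_gen_comm c w : GRing.comm ((lmul \o s) c) (phi_gen w).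
Proof.
case: w => [x | y] /=; last exact: lmul_rmul_comm.
by rewrite /GRing.comm -!lmulM qscal_comm.
Qed.

Lemma psi_gen_comm c w : GRing.comm (conv_rmorph (lmul \o s) c) (psi_gen w).
Proof.
case: w => [y | x]; apply: commr_conv; last exact: lmul_rmul_comm.
by rewrite /GRing.comm -!lmulM qscal_comm.
Qed.

Lemma phi_rels a b : @rels k (tens Z T) a b -> phi a = phi b.
Proof.
case=> {a b} [a b ab | a b ab | x y].
- by rewrite !phi_inl; congr lmul; apply/qpi_eq/teq_rel.
- by rewrite !phi_inr (antipode_teq (teq_rel ab)).
- exact: lmul_rmul_comm.
Qed.

Lemma phi_teq a b : peq (tens Z T) a b -> phi a = phi b.
Proof. exact: (interp_teq phi_gen_comm (@phi_rels)). Qed.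

Lemma psi_rels a b : @rels k (tens T Z) a b -> psi a = psi b.
Proof.
case=> {a b} [a b ab | a b ab | y x].
- by rewrite !psi_inl (antipode_teq (teq_rel ab)).
- by rewrite !psi_inr; congr rmul; apply/qpi_eq/teq_rel.
- by apply: commr_conv; exact: lmul_rmul_comm.
Qed.

Lemma psi_teq a b : peq (tens T Z) a b -> psi a = psi b.
Proof. exact: (interp_teq psi_gen_comm (@psi_rels)). Qed.

Lemma phi_counit a :
  phi (subst (comult m n m) a) 1 = s (interp idfun (@counit_val k m) a).
Proof.
case: Z_solution => h1 _ _ _.
have kron_mx (i j : 'I_m) : (i == j)%:R = (1%:M : 'M[QZ]_m) i j by rewrite mxE.
rewrite /phi interp_subst; apply: interp_aend_at1 => [c x | [] i j].
- exact: interp_scal_comm phi_gen_comm c _.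
- rewrite [counit_val _]/= rmorph_nat kron_mx -h1 mxE interp_tsum aend_sumE.
  by apply: eq_bigr => l _; rewrite /= mul1r !mxE.
- rewrite [counit_val _]/= rmorph_nat kron_mx -VZ_XZ mxE interp_tsum aend_sumE.
  by apply: eq_bigr => l _; rewrite /= mul1r vmxE.
Qed.

Lemma psi_counit b :
  psi (subst (comult n m n) b) 1 = s (interp idfun (@counit_val k n) b).
Proof.
case: Z_solution => _ _ h3 _.
have kron_mx (i j : 'I_n) : (i == j)%:R = (1%:M : 'M[QZ]_n) i j by rewrite mxE.
rewrite /psi interp_subst; apply: interp_conv_aend_at1 => [c x | [] i j].
- exact: interp_scal_comm psi_gen_comm c _.
- rewrite [counit_val _]/= rmorph_nat kron_mx -h3 mxE interp_tsum aend_sumE.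
  by apply: eq_bigr => l _; rewrite /= mulr1 !mxE.
- rewrite [counit_val _]/= rmorph_nat kron_mx -XZ_VZ mxE interp_tsum aend_sumE.
  by apply: eq_bigr => l _; rewrite /= mulr1 vmxE.
Qed.

Lemma nonzero_antipode_domain : nonzero Z -> nonzero T.
Proof. by move=> nzZ; apply: (nonzero_interp (@antipode_teq)); exact: qalg1_neq0. Qed.

Lemma nonzero_phi_domain : nonzero Z -> nonzero (tens Z T).
Proof. by move=> nzZ; apply: (nonzero_interp (@phi_teq)); exact/aend1_neq0/qalg1_neq0. Qed.

Lemma nonzero_psi_domain : nonzero Z -> nonzero (tens T Z).
Proof. by move=> nzZ; apply: (nonzero_interp (@psi_teq)); exact/aend1_neq0/qalg1_neq0. Qed.

Definition antipode_term (t : term (gen n m)) : term (gen m n) := repr (antipode t : QZ).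
Definition phi_term (w : term (gen m n + gen n m)) : term (gen m n) := repr (phi w 1).
Definition psi_term (w : term (gen n m + gen m n)) : term (gen m n) := repr (psi w 1).

Lemma antipode_term_linmap : is_linmap (antipode_term : term (gens T) -> term (gens Z)).
Proof.
apply: (@is_linmap_repr _ T Z) => [a b | // | c a]; first exact: antipode_teq.
by symmetry; exact: qscal_comm.
Qed.

Lemma phi_term_linmap : is_linmap (phi_term : term (gens (tens Z T)) -> term (gens Z)).
Proof.
by apply: (@is_linmap_repr _ (tens Z T) Z) => // a b /phi_teq ->.
Qed.

Lemma psi_term_linmap : is_linmap (psi_term : term (gens (tens T Z)) -> term (gens Z)).
Proof.
apply: (@is_linmap_repr _ (tens T Z) Z) => [a b /psi_teq -> // | // | c a].
have := congr1 (fun f : aend QZ => f 1) (interp_scal_comm psi_gen_comm c a).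
by rewrite /= mulr1.
Qed.

Lemma HP_antipode :
  exists S : term (gens T) -> term (gens Z),
    [/\ is_linmap S,
        exists Phi : term (gens (tens Z T)) -> term (gens Z),
          [/\ is_linmap Phi,
              (forall z t, peq Z (Phi (tmul (tmap inl z) (tmap inr t))) (tmul z (S t))) &
              (forall a, peq Z
                 (Phi (subst (comult m n m : ahom (HP m m E E) (tens Z T)) a))
                 (subst (Defs.comp (counit m : ahom (HP m m E E) kP) (unith Z)) a))] &
        exists Psi : term (gens (tens T Z)) -> term (gens Z),
          [/\ is_linmap Psi,
              (forall t z, peq Z (Psi (tmul (tmap inl t) (tmap inr z))) (tmul (S t) z)) &
              (forall b, peq Z
                 (Psi (subst (comult n m n : ahom (HP n n F F) (tens T Z)) b))
                 (subst (Defs.comp (counit n : ahom (HP n n F F) kP) (unith Z)) b))]].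
Proof.
exists antipode_term; split; first exact: antipode_term_linmap.
- exists phi_term; split; first exact: phi_term_linmap.
  + move=> z t; apply/qpi_eq; rewrite qpiM !qpiK.
    by rewrite phiM aend_mulE phi_inl phi_inr /= mul1r.
  + by move=> a; apply/qpi_eq; rewrite qpiK qpi_counit phi_counit.
- exists psi_term; split; first exact: psi_term_linmap.
  + move=> t z; apply/qpi_eq; rewrite qpiM !qpiK.
    by rewrite psiM aend_mulE psi_inl psi_inr /= mulr1.
  + by move=> b; apply/qpi_eq; rewrite qpiK qpi_counit psi_counit.
Qed.

End AntipodeMaps.

Section HopfGaloisAxioms.
Variable k : fieldType.

Lemma HP_bialgebra p (A : 'M[k]_p) : A \in unitmx ->
  is_bialgebra (comult p p p : ahom (HP p p A A) (tens (HP p p A A) (HP p p A A)))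
               (counit p : ahom (HP p p A A) kP).
Proof.
move=> A_unit; split; [exact: comult_hom | exact: counit_hom | exact: comult_coassoc |
                       exact: comult_counitl | exact: comult_counitr].
Qed.

Variables (m n : nat) (E : 'M[k]_m) (F : 'M[k]_n).
Hypotheses (E_unit : E \in unitmx) (F_unit : F \in unitmx).
Local Notation HE := (HP m m E E).
Local Notation HF := (HP n n F F).
Local Notation Z := (HP m n E F).
Local Notation T := (HP n m F E).

Lemma HP_bicomodule_algebra :
  is_bicomodule_algebra
    (comult m m m : ahom HE (tens HE HE))
    (counit m : ahom HE kP)
    (comult n n n : ahom HF (tens HF HF))
    (counit n : ahom HF kP)
    (comult m m n : ahom Z (tens HE Z))
    (comult m n n : ahom Z (tens Z HF)).
Proof.
split; [exact: comult_hom | exact: comult_hom | split | split | ].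
all: by [exact: comult_coassoc | exact: comult_counitl | exact: comult_counitr].
Qed.

Lemma HP_galois_maps :
  [/\ is_hom (comult m n m : ahom HE (tens Z T)),
      is_hom (comult n m n : ahom HF (tens T Z)),
      heq (Defs.comp (Defs.comp (comult m m n : ahom Z (tens HE Z))
                                (tensh (comult m n m : ahom HE (tens Z T)) (idh Z)))
                     (@assoc _ Z T Z))
          (Defs.comp (comult m n n : ahom Z (tens Z HF))
                     (tensh (idh Z) (comult n m n : ahom HF (tens T Z)))),
      heq (Defs.comp (Defs.comp (comult m n m : ahom HE (tens Z T))
                                (tensh (comult m m n : ahom Z (tens HE Z)) (idh T)))
                     (@assoc _ HE Z T))
          (Defs.comp (comult m m m : ahom HE (tens HE HE))
                     (tensh (idh HE) (comult m n m : ahom HE (tens Z T)))) &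
      heq (Defs.comp (comult n m n : ahom HF (tens T Z))
                     (tensh (idh T) (comult m n n : ahom Z (tens Z HF))))
          (Defs.comp (Defs.comp (comult n n n : ahom HF (tens HF HF))
                                (tensh (comult n m n : ahom HF (tens T Z)) (idh HF)))
                     (@assoc _ T Z HF))].
Proof.
split; [exact: comult_hom | exact: comult_hom | exact: comult_coassoc |
        exact: comult_coassoc | exact/heq_sym/comult_coassoc].
Qed.

Lemma HP_nonzero : nonzero Z ->
  [/\ nonzero HE, nonzero HF, nonzero Z &
      nonzero T].
Proof.
move=> nzZ; split=> //; last exact: nonzero_antipode_domain.
- apply: nonzero_hom (nonzero_phi_domain E_unit F_unit nzZ); exact: comult_hom.
- apply: nonzero_hom (nonzero_psi_domain E_unit F_unit nzZ); exact: comult_hom.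
Qed.

End HopfGaloisAxioms.

Theorem proposition4p3 (k : fieldType) (m n : nat) (E : 'M[k]_m) (F : 'M[k]_n)
  (hE : E \in unitmx) (hF : F \in unitmx) (hEF : nonzero (HP m n E F)) :
  hopf_galois_system (HP m m E E) (HP n n F F) (HP m n E F) (HP n m F E)
    (comult m m m : ahom (HP m m E E) (tens (HP m m E E) (HP m m E E)))
    (counit m : ahom (HP m m E E) kP)
    (comult n n n : ahom (HP n n F F) (tens (HP n n F F) (HP n n F F)))
    (counit n : ahom (HP n n F F) kP)
    (comult m m n : ahom (HP m n E F) (tens (HP m m E E) (HP m n E F)))
    (comult m n n : ahom (HP m n E F) (tens (HP m n E F) (HP n n F F)))
    (comult m n m : ahom (HP m m E E) (tens (HP m n E F) (HP n m F E)))
    (comult n m n : ahom (HP n n F F) (tens (HP n m F E) (HP m n E F))).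
Proof.
split.
- exact: HP_nonzero.
- by split; apply: HP_bialgebra.
- exact: HP_bicomodule_algebra.
- exact: HP_galois_maps.
- exact: HP_antipode.
Qed.
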